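(* Let $H$ be a non-complete, connected, regular graph. For every $G\in\operatorname{obs}^\ast(H)$ there are distinct vertices $u,v\in V(G)$ that are true twins in $G$ (i.e., $N_G[u]=N_G[v]$) and satisfy $G-u\cong H\cong G-v$.
   Context: All graphs are finite, simple and loopless. $N[x]$ denotes the closed neighbourhood of $x$. A full-homomorphism $\varphi\colon G\to H$ is a map $V(G)\to V(H)$ such that for all $x,y\in V(G)$, $xy\in E(G)$ if and only if $\varphi(x)\varphi(y)\in E(H)$. A full $H$-colouring of $G$ is a full-homomorphism $G\to H$. A minimal $H$-obstruction is a graph $G$ that admits no full $H$-colouring while every proper induced subgraph of $G$ admits one; $\operatorname{obs}(H)$ denotes the set of minimal $H$-obstructions (up to isomorphism), and $\operatorname{obs}^\ast(H)$ the set of minimal $H$-obstructions on exactly $|V(H)|+1$ vertices. *)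

From mathcomp Require Import all_boot.
Set Implicit Arguments. Unset Strict Implicit. Unset Printing Implicit Defensive.

Definition simple_graph (V : finType) (e : rel V) : Prop :=
  symmetric e /\ irreflexive e.

Definition full_hom (A B : finType) (eA : rel A) (eB : rel B) (phi : A -> B) : Prop :=
  forall x y, eA x y = eB (phi x) (phi y).

Definition full_colourable (A B : finType) (eA : rel A) (eB : rel B) : Prop :=
  exists phi : A -> B, full_hom eA eB phi.

Definition induced (V : finType) (e : rel V) (S : {set V}) : rel {x : V | x \in S} :=
  fun x y => e (val x) (val y).
Arguments induced {V} e S.

Definition minimal_obstruction (V W : finType) (eG : rel V) (eH : rel W) : Prop :=
  ~ full_colourable eG eH /\
  forall S : {set V}, S != setT -> full_colourable (induced eG S) eH.

Definition regular (W : finType) (e : rel W) : Prop :=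
  exists k, forall x : W, #|[set y | e x y]| = k.

Definition connected_graph (W : finType) (e : rel W) : Prop :=
  forall x y : W, connect e x y.

Definition complete_graph (W : finType) (e : rel W) : Prop :=
  forall x y : W, x != y -> e x y.

Definition closed_nbhd (V : finType) (e : rel V) (x : V) : {set V} :=
  [set y | (y == x) || e x y].

Definition isomorphic (A B : finType) (eA : rel A) (eB : rel B) : Prop :=
  exists g : A -> B, bijective g /\ forall x y, eA x y = eB (g x) (g y).

Definition delete_vertex (V : finType) (e : rel V) (u : V) :=
  induced e [set x | x != u].
Arguments delete_vertex {V} e u.

From mathcomp Require Import all_boot zify.
From Stdlib Require Import Classical_Prop.
Set Implicit Arguments. Unset Strict Implicit. Unset Printing Implicit Defensive.

(* For every vertex x, G - x has a full H-colouring and |H| vertices, so the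
   colouring is either a bijection, giving G - x ~ H, or it identifies two
   twins a, b of G - x.  G has no false twins (a colouring of G - a would
   extend to G), hence x separates them: N(a) = N(b) + {x}.  If a vertex v of
   maximum degree is separated in this way, then b must be too, necessarily by
   a pair (a', v), and deg a' = deg v + 1; hence some G - x is isomorphic to H.
   As H is k-regular, every y <> x then has degree k + [xy in E(G)], so a
   second such vertex y is a twin, hence a true twin, of x.  If there were
   none, every y <> x would be separated, which forces x to be adjacent to all
   other vertices or to none; then H is (|H| - 1)-regular, or connected and
   1-regular, so complete. *)

Definition deg (V : finType) (e : rel V) (x : V) := #|[set y | e x y]|.

Definition split_twins (V : finType) (e : rel V) (x a b : V) :=
  ~~ e b x /\ forall z, e a z = (z == x) || e b z.

Section GeneralGraphs.

Variables (V : finType) (e : rel V).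

Lemma card_delete_vertex (u : V) : #|{: {x | x \in [set y | y != u]}}| = #|V|.-1.
Proof.
by rewrite card_sig -(cardsC1 u); apply: eq_card => y; rewrite !inE.
Qed.

Lemma deg_delete_vertex (u : V) (y : {x | x \in [set z | z != u]}) :
  deg e (val y) = deg (delete_vertex e u) y + e (val y) u.
Proof.
have -> : deg (delete_vertex e u) y = #|[set z | e (val y) z] :\ u|.
  rewrite /deg -(card_imset _ val_inj); apply: eq_card => z; rewrite !inE.
  apply/imsetP/andP => [[z' yz' ->]|[zu yz]].
    by move: yz' (valP z'); rewrite !inE => + ->.
  have zS : z \in [set z | z != u] by rewrite inE.
  by exists (exist _ z zS); rewrite ?inE.
by rewrite /deg (cardsD1 u) inE addnC.
Qed.

Lemma deg_iso (W : finType) (eH : rel W) (g : V -> W) :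
  bijective g -> (forall x y, e x y = eH (g x) (g y)) ->
  forall x, deg e x = deg eH (g x).
Proof.
move=> [h gK hK] hg x; rewrite /deg -(card_imset _ (can_inj gK)).
apply: eq_card => w; rewrite !inE; apply/imsetP/idP.
  by case=> y + ->; rewrite inE hg.
by move=> xw; exists (h w); rewrite ?inE ?hg hK.
Qed.

Lemma full_hom_fibre_twins (W : finType) (eH : rel W) (phi : V -> W) (p q : V) :
  full_hom e eH phi -> phi p = phi q -> forall z, e p z = e q z.
Proof. by move=> hphi fpq z; rewrite !hphi fpq. Qed.

Lemma full_hom_inj_isomorphic (W : finType) (eH : rel W) (phi : V -> W) :
  #|V| = #|W| -> injective phi -> full_hom e eH phi -> isomorphic e eH.
Proof.
by move=> card inj hphi; exists phi; split=> //; apply: inj_card_bij inj _; rewrite card.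
Qed.

Lemma full_colourable_false_twin (W : finType) (eH : rel W) (p q : V) :
  symmetric e -> p != q -> (forall z, e p z = e q z) ->
  full_colourable (delete_vertex e p) eH -> full_colourable e eH.
Proof.
move=> sym pq tw [chi hchi].
have qS : q \in [set y | y != p] by rewrite inE eq_sym.
pose Q := exist _ q qS : {x | x \in [set y | y != p]}.
have twq y z : e y z = e y (val (insubd Q z)).
  by rewrite val_insubd inE; case: (eqVneq z p) => [->|] //=; rewrite sym tw sym.
exists (fun y => chi (insubd Q y)) => y z.
by rewrite -hchi /induced (twq y z) sym (twq _ y) sym.
Qed.

Hypothesis sG : simple_graph e.

Lemma split_twinsE (x a b : V) :
  split_twins e x a b -> [/\ a != b, b != x & e a x].
Proof.
have [sym irr] := sG; case=> nbx E.
have ax : e a x by rewrite E eqxx.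
have ab : a != b by apply: contraNneq nbx => <-.
split=> //; apply/eqP => bx; move: (E a).
by rewrite bx irr sym ax orbT.
Qed.

Lemma deg_split_twins (x a b : V) :
  split_twins e x a b -> deg e a = (deg e b).+1.
Proof.
case=> nbx E; rewrite /deg.
have -> : [set y | e a y] = x |: [set y | e b y] by apply/setP => z; rewrite !inE E.
by rewrite cardsU1 inE nbx.
Qed.

Lemma split_twins_chain (v a b a' b' : V) :
  split_twins e v a b -> split_twins e b a' b' -> b' = v.
Proof.
have [sym irr] := sG.
move=> h1 h2; have [ab _ _] := split_twinsE h1.
have [_ E1] := h1; have [nb'b E2] := h2.
have ea'b : e a' b by rewrite E2 eqxx.
have eaa' : e a a' by rewrite E1 sym ea'b orbT.
have eb'a : e b' a by move: eaa'; rewrite sym E2 (negbTE ab).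
by move: eb'a; rewrite sym E1 sym (negbTE nb'b) orbF => /eqP.
Qed.

End GeneralGraphs.

Section RegularGraphs.

Variables (W : finType) (eH : rel W).
Hypothesis sH : simple_graph eH.

Lemma regular_full_degree_complete k :
  (forall w, deg eH w = k) -> k.+1 = #|W| -> complete_graph eH.
Proof.
have [_ irr] := sH; move=> hk hn w1 w2 w12.
have : [set z | eH w1 z] == [set~ w1].
  rewrite eqEcard cardsC1 -/(deg eH w1) hk -hn /= leqnn andbT.
  by apply/subsetP => z; rewrite !inE; apply: contraTneq => ->; rewrite irr.
by move/eqP/setP/(_ w2); rewrite !inE eq_sym w12.
Qed.

Lemma connected_1regular_complete :
  connected_graph eH -> (forall w, deg eH w = 1) -> complete_graph eH.
Proof.
have [sym _] := sH; move=> con h1.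
have uniq_nb u v v' : eH u v -> eH u v' -> v = v'.
  have /cards1P [c hc] : #|[set z | eH u z]| == 1 by rewrite -/(deg eH u) h1.
  move=> hv hv'; move/setP: hc => hc.
  by move: (hc v) (hc v'); rewrite !inE hv hv' => /esym/eqP -> /esym/eqP ->.
move=> w1 w2 w12.
have /card_gt0P [c] : 0 < deg eH w1 by rewrite h1.
rewrite inE => hc; have hc' : eH c w1 by rewrite sym.
pose edge := [pred z | (z == w1) || (z == c)].
have cl : closed eH edge.
  move=> u v huv; rewrite !inE.
  case: (eqVneq u w1) => [eu|uw1]; first by subst u; rewrite (uniq_nb _ _ _ huv hc) eqxx orbT.
  case: (eqVneq u c) => [eu|uc]; first by subst u; rewrite (uniq_nb _ _ _ huv hc') eqxx.
  apply/esym/negbTE/orP; case=> /eqP ev; subst v.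
  - by move: uc; rewrite (uniq_nb _ _ _ hc (_ : eH w1 u)) ?eqxx // sym.
  - by move: uw1; rewrite (uniq_nb _ _ _ (_ : eH c u) hc') ?eqxx // sym.
have := closed_connect cl (con w1 w2).
by rewrite !inE eqxx /= eq_sym (negbTE w12) => /esym /eqP ->.
Qed.

End RegularGraphs.

Section MinimalObstruction.

Variables (W V : finType) (eH : rel W) (eG : rel V).
Hypotheses (sH : simple_graph eH) (sG : simple_graph eG).
Hypotheses (mo : minimal_obstruction eG eH) (cardV : #|V| = #|W|.+1).

Lemma delete_vertex_proper (x : V) : [set y | y != x] != setT.
Proof. by apply/eqP => /setP /(_ x); rewrite !inE eqxx. Qed.

Lemma obstruction_no_false_twins (p q : V) :
  p != q -> ~ (forall z, eG p z = eG q z).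
Proof.
move=> pq tw; have [nc colour] := mo; apply: nc.
apply: (full_colourable_false_twin _ pq tw (colour _ (delete_vertex_proper p))).
by case: sG.
Qed.

Lemma deletion_iso_or_split (x : V) :
  isomorphic (delete_vertex eG x) eH \/ exists a b, split_twins eG x a b.
Proof.
have [phi hphi] := mo.2 _ (delete_vertex_proper x).
have [inj|] := boolP (injectiveb phi).
  left; apply: full_hom_inj_isomorphic hphi => //; last exact/injectiveP.
  by rewrite card_delete_vertex cardV.
case/injectivePn => p [q pq fpq]; right.
have tw z : z != x -> eG (val p) z = eG (val q) z.
  move=> zx; have zS : z \in [set y | y != x] by rewrite inE.
  exact: (full_hom_fibre_twins hphi fpq (exist _ z zS)).
have vpq : val p != val q by rewrite val_eqE.
have split_of (a b : V) : ~~ eG b x -> eG a x ->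
    (forall z, z != x -> eG a z = eG b z) -> split_twins eG x a b.
  move=> nbx ax ab; split=> // z; case: eqVneq => [->|/ab] //.
case: (boolP (eG (val p) x)) => hp; case: (boolP (eG (val q) x)) => hq.
- exfalso; apply: (obstruction_no_false_twins vpq) => z.
  by case: (eqVneq z x) => [->|/tw]; rewrite ?hp ?hq.
- by exists (val p), (val q); apply: split_of.
- by exists (val q), (val p); apply: split_of => // z /tw.
- exfalso; apply: (obstruction_no_false_twins vpq) => z.
  by case: (eqVneq z x) => [->|/tw]; rewrite ?(negbTE hp) ?(negbTE hq).
Qed.

Lemma exists_deletion_iso : exists x, isomorphic (delete_vertex eG x) eH.
Proof.
have /card_gt0P [v0 _] : 0 < #|V| by rewrite cardV.
have [v _ vmax] := arg_maxnP (deg eG) (erefl true : predT v0).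
have [isov|[a [b sv]]] := deletion_iso_or_split v; first by exists v.
have [isob|[a' [b' sb]]] := deletion_iso_or_split b; first by exists b.
have b'v := split_twins_chain sG sv sb; subst b'.
by have := vmax a' isT; rewrite (deg_split_twins sb) /= ltnn.
Qed.

Variable k : nat.
Hypothesis regH : forall w, deg eH w = k.

Lemma deg_off_iso_deletion (x y : V) :
  isomorphic (delete_vertex eG x) eH -> y != x -> deg eG y = k + eG y x.
Proof.
move=> [g [gb hg]] yx; have yS : y \in [set z | z != x] by rewrite inE.
by rewrite (deg_delete_vertex _ (exist _ y yS)) (deg_iso gb hg) regH.
Qed.

Lemma iso_deletions_true_twins (x y : V) :
  x != y -> isomorphic (delete_vertex eG x) eH -> isomorphic (delete_vertex eG y) eH ->
  closed_nbhd eG x = closed_nbhd eG y.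
Proof.
have [sym irr] := sG; move=> xy isox isoy.
have tw z : z != x -> z != y -> eG x z = eG y z.
  move=> zx zy; have := deg_off_iso_deletion isox zx.
  by rewrite (deg_off_iso_deletion isoy zy) (sym x) (sym y) => /addnI /eqP; do 2!case: eG.
have exy : eG x y.
  apply/negPn/negP => nxy; apply: (obstruction_no_false_twins xy) => z.
  case: (eqVneq z x) => [->|zx]; first by rewrite irr sym (negbTE nxy).
  case: (eqVneq z y) => [->|zy]; first by rewrite irr (negbTE nxy).
  exact: tw.
apply/setP => z; rewrite /closed_nbhd !inE.
case: (eqVneq z x) => [->|zx]; first by rewrite sym exy orbT.
by case: (eqVneq z y) => [->|zy]; rewrite ?exy ?tw.
Qed.

Lemma deg_iso_deletion_split (x y a b : V) :
  isomorphic (delete_vertex eG x) eH -> y != x -> split_twins eG y a b ->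
  (eG x y /\ deg eG x = k.+1) \/ (~~ eG x y /\ (deg eG x).+1 = k).
Proof.
have [sym irr] := sG; move=> isox yx sy.
have [ab by_ ya] := split_twinsE sG sy.
have da := deg_split_twins sy; have [nby E] := sy.
have dx := deg_off_iso_deletion isox.
case: (eqVneq a x) => [ax|ax]; first subst a.
  have bx : b != x by rewrite eq_sym.
  by left; split=> //; rewrite da (dx b bx) sym E (negbTE by_) irr addn0.
case: (eqVneq b x) => [bx|bx]; first subst b.
  by right; split=> //; rewrite -da (dx a ax) E eq_sym (negbTE yx) irr addn0.
by exfalso; move: da; rewrite (dx a ax) (dx b bx) E eq_sym (negbTE yx); lia.
Qed.

Lemma unique_iso_deletion_complete (x : V) :
  connected_graph eH -> isomorphic (delete_vertex eG x) eH ->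
  (forall y, y != x -> exists a b, split_twins eG y a b) -> complete_graph eH.
Proof.
have [sym irr] := sG; move=> con isox split.
have [W0|Wpos] := posnP #|W|; first by move=> w; have := card0_eq W0 w; rewrite !inE.
have /card_gt0P [y0] : 0 < #|[set~ x]| by rewrite cardsC1 cardV.
rewrite !inE => y0x.
have alt y : y != x -> (eG x y /\ deg eG x = k.+1) \/ (~~ eG x y /\ (deg eG x).+1 = k).
  by move=> yx; have [a [b sy]] := split y yx; apply: deg_iso_deletion_split sy.
have [[_ dx]|[_ dx]] := alt y0 y0x.
- have univ y : y != x -> eG x y by move=> yx; case: (alt y yx) => [[]|[_ dx']] //; exfalso; lia.
  apply: (regular_full_degree_complete sH regH).
  have -> : #|W| = #|[set~ x]| by rewrite cardsC1 cardV.
  by rewrite -dx /deg; apply: eq_card => z; rewrite !inE; case: (eqVneq z x) => [->|/univ ->]; rewrite ?irr.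
- have isol y : y != x -> ~~ eG x y by move=> yx; case: (alt y yx) => [[_ dx']|[]] //; exfalso; lia.
  have d0 : deg eG x = 0.
    apply/eqP; rewrite cards_eq0; apply/eqP/setP => z; rewrite !inE.
    by case: (eqVneq z x) => [->|/isol/negbTE]; rewrite ?irr.
  by rewrite d0 in dx; subst k; apply: connected_1regular_complete.
Qed.

End MinimalObstruction.

Theorem lemma3p3 (W : finType) (eH : rel W) (V : finType) (eG : rel V) :
  simple_graph eH -> ~ complete_graph eH -> connected_graph eH -> regular eH ->
  simple_graph eG -> #|V| = #|W|.+1 -> minimal_obstruction eG eH ->
  exists u v : V,
    [/\ u != v, closed_nbhd eG u = closed_nbhd eG v,
        isomorphic (delete_vertex eG u) eH & isomorphic (delete_vertex eG v) eH].
Proof.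
move=> sH ncH con [k regH] sG cardV mo.
have [x isox] := exists_deletion_iso sG mo cardV.
case: (classic (exists2 y, y != x & isomorphic (delete_vertex eG y) eH)) => [[y yx isoy]|noiso].
  have xy : x != y by rewrite eq_sym.
  by exists x, y; split=> //; apply: (iso_deletions_true_twins sG mo regH).
exfalso; apply: ncH; apply: (unique_iso_deletion_complete sH sG cardV regH con isox).
move=> y yx; have [isoy|//] := deletion_iso_or_split sG mo cardV y.
by case: noiso; exists y.
Qed.
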